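(* For each even integer $r\ge 2$, there are infinitely many $r$-regular graphs $G$ of even order with $\chi_{la}(G)=3$ and chromatic number $\chi(G)=2$.
   Context: For a connected graph $G=(V,E)$ with $q=|E|$, a local antimagic labeling is a bijection $f:E\to\{1,\dots,q\}$ such that adjacent vertices $x,y$ satisfy $f^+(x)\ne f^+(y)$, where $f^+(x)=\sum f(e)$ over edges $e$ incident to $x$; the local antimagic chromatic number $\chi_{la}(G)$ is the minimum number of distinct values of $f^+$ over all local antimagic labelings $f$ of $G$. *)

From mathcomp Require Import all_boot.
Set Implicit Arguments. Unset Strict Implicit. Unset Printing Implicit Defensive.

Section Graphs.
Variable n : nat.
Variable adj : rel 'I_n.

Definition simple_graph : Prop := symmetric adj /\ irreflexive adj.

Definition connected_graph : Prop := forall x y : 'I_n, connect adj x y.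

Definition regular (r : nat) : Prop :=
  forall x : 'I_n, #|[set y | adj x y]| = r.

Definition edges : {set {set 'I_n}} :=
  [set e | [exists x, exists y, adj x y && (e == [set x; y])]].

Definition edge_labeling (f : {set 'I_n} -> nat) : Prop :=
  {in edges &, injective f} /\
  (forall e, e \in edges -> 1 <= f e <= #|edges|) /\
  (forall k, 1 <= k <= #|edges| -> exists2 e, e \in edges & f e = k).

Definition fplus (f : {set 'I_n} -> nat) (x : 'I_n) : nat :=
  \sum_(e in edges | x \in e) f e.

Definition local_antimagic (f : {set 'I_n} -> nat) : Prop :=
  edge_labeling f /\ forall x y, adj x y -> fplus f x != fplus f y.

Definition num_induced_colors (f : {set 'I_n} -> nat) : nat :=
  size (undup [seq fplus f x | x <- enum 'I_n]).

Definition chi_la_eq (k : nat) : Prop :=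
  (exists2 f, local_antimagic f & num_induced_colors f = k) /\
  (forall f, local_antimagic f -> k <= num_induced_colors f).

Definition colorable (k : nat) : Prop :=
  exists c : 'I_n -> 'I_k, forall x y, adj x y -> c x != c y.

Definition chromatic_number_eq (k : nat) : Prop :=
  colorable k /\ forall j, j < k -> ~ colorable j.

End Graphs.

(* The graph is the bipartite circulant with parts U_0, ..., U_(m-1) and
   W_0, ..., W_(m-1), where U_i ~ W_(i+j mod m) for j < r <= m: it is simple,
   connected, r-regular and bipartite, hence 2-chromatic.

   Lower bound: if a local antimagic labeling induced only two colors on a
   connected bipartite graph, the colors would be constant on each side.
   Summing f^+ over either side counts every label exactly once, and
   regularity makes both sides equally large, so the two colors would agree.

   Upper bound: give the edge U_i W_(i+j) the label j m + i + 1 if j is even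
   and j m + m - i if j is odd. For each pair of columns 2t, 2t+1 the two
   labels at U_i have a sum independent of i, so every U_i gets the same sum
   S. At W_l the pair of columns 2t, 2t+1 contributes one more than at U_i,
   except when l = 2t, where the wrap-around from U_0 to U_(m-1) makes it
   m - 1 less. Hence f^+ takes exactly the values S, S + r/2 and S + r/2 - m. *)

From mathcomp Require Import all_boot zify.
Set Implicit Arguments. Unset Strict Implicit. Unset Printing Implicit Defensive.

Lemma connect_flip_eq (T : finType) (e : rel T) (c s : pred T) x y :
    (forall x y, e x y -> c x != c y) -> (forall x y, e x y -> s x != s y) ->
  connect e x y -> (c x == c y) = (s x == s y).
Proof.
move=> c_flip s_flip xy.
have closed_cs : closed e [pred z | c z (+) s z].
  move=> u v uv; move: (c_flip u v uv) (s_flip u v uv); rewrite !inE.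
  by case: (c u) (c v) (s u) (s v) => [] [] [] [].
move: (closed_connect closed_cs xy); rewrite !inE.
by case: (c x) (c y) (s x) (s y) => [] [] [] [].
Qed.

Lemma injective_into_iota (I : finType) (h : I -> nat) :
    injective h -> (forall p, 0 < h p <= #|I|) ->
  forall k, 0 < k <= #|I| -> exists p, h p = k.
Proof.
move=> h_inj h_range k k_range.
have h_uniq : uniq [seq h p | p <- enum I] by rewrite map_inj_uniq ?enum_uniq.
have h_sub : {subset [seq h p | p <- enum I] <= iota 1 #|I|}.
  by move=> _ /mapP [p _ ->]; rewrite mem_iota add1n ltnS.
have h_size : size (iota 1 #|I|) <= size [seq h p | p <- enum I].
  by rewrite size_map size_iota cardE.
have [_ /(_ k)] := uniq_min_size h_uniq h_sub h_size.
rewrite mem_iota add1n ltnS k_range => /mapP [p _ ->].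
by exists p.
Qed.

Lemma sum_nat_pairs (F : nat -> nat) k :
  \sum_(0 <= j < k.*2) F j = \sum_(0 <= t < k) (F t.*2 + F t.*2.+1).
Proof.
elim: k => [|k IHk]; first by rewrite !big_geq.
by rewrite doubleS !big_nat_recr //= IHk addnA.
Qed.

Lemma sum_nat_eq_double l k :
  \sum_(0 <= t < k) (l == t.*2) = (l < k.*2) && ~~ odd l.
Proof.
elim: k => [|k IHk]; first by rewrite big_geq.
rewrite big_nat_recr //= IHk doubleS.
case: (eqVneq l k.*2) => [->|neq]; first by rewrite odd_double ltnn leqnSn.
rewrite addn0; case: (ltnP l k.*2) => [lt_lk|le_kl].
  by have -> : l < k.*2.+2 by lia.
have [->|neq1] := eqVneq l k.*2.+1; first by rewrite /= odd_double andbF.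
by have -> : l < k.*2.+2 = false by lia.
Qed.

Lemma modn_cyclic_sub m l s : l < m -> s <= m ->
  (l + m - s) %% m = if s <= l then l - s else l + m - s.
Proof.
move=> lt_lm le_sm; case: leqP => [le_sl|lt_ls]; last by rewrite modn_small; lia.
by rewrite -addnBAC // modnDr modn_small //; lia.
Qed.

Section InducedColors.
Variables (n : nat) (adj : rel 'I_n).

Definition bipartition (side : pred 'I_n) : Prop :=
  forall x y, adj x y -> side x != side y.

Lemma bipartitionC side : bipartition side -> bipartition (predC side).
Proof. by move=> bip x y /bip /=; case: (side x) (side y) => [] []. Qed.

Lemma edgesP e :
  reflect (exists x y, adj x y /\ e = [set x; y]) (e \in edges adj).
Proof.
rewrite inE; apply: (iffP existsP) => [[x /existsP [y /andP [xy /eqP ->]]]|].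
  by exists x, y.
by case=> x [y [xy ->]]; exists x; apply/existsP; exists y; rewrite xy eqxx.
Qed.

Lemma fplus_nbhs f x : simple_graph adj ->
  fplus adj f x = \sum_(y in [set y | adj x y]) f [set x; y].
Proof.
case=> adj_sym adj_irr.
have nbhs_inj : {in [set y | adj x y] &, injective (fun y => [set x; y])}.
  move=> y y'; rewrite !inE => xy xy' eq_xy.
  have : y \in [set x; y'] by rewrite -eq_xy set22.
  by rewrite in_set2 => /orP [/eqP yx|/eqP //]; rewrite yx adj_irr in xy.
rewrite /fplus -(big_imset _ nbhs_inj); apply: eq_bigl => e.
apply/andP/imsetP => [[/edgesP [a [b [ab ->]]]]|[y]].
  rewrite in_set2 => /orP [] /eqP ->; first by exists b; rewrite ?inE.
  by exists a; rewrite ?inE 1?adj_sym // setUC.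
by rewrite inE => xy ->; split; [apply/edgesP; exists x, y | rewrite set21].
Qed.

Lemma sum_fplus_bipartition side f : bipartition side ->
  \sum_(x | side x) fplus adj f x = \sum_(e in edges adj) f e.
Proof.
move=> bip; rewrite /fplus (exchange_big_dep (mem (edges adj))) /=; last first.
  by move=> x e _ /andP [].
apply: eq_bigr => _ /edgesP [a [b [ab ->]]].
have ab_edge : [set a; b] \in edges adj by apply/edgesP; exists a, b.
move: ab_edge (bip a b ab); clear ab.
wlog side_a : a b / side a => [wlog_ab ab_edge side_ab|ab_edge side_ab].
  case: (boolP (side a)) => [side_a|side_na]; first exact: wlog_ab.
  rewrite setUC; apply: wlog_ab; rewrite 1?setUC // 1?eq_sym //.
  by move: side_ab side_na; case: (side a); case: (side b).
have side_b : side b = false by move: side_ab; rewrite side_a; case: (side b).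
rewrite (eq_bigl (pred1 a)) ?big_pred1_eq // => x /=.
rewrite ab_edge in_set2; case: (eqVneq x a) => [->|_]; first by rewrite side_a.
by case: (eqVneq x b) => [->|]; rewrite ?side_b ?andbF.
Qed.

Lemma regular_bipartition_card r side :
    simple_graph adj -> regular adj r -> 0 < r -> bipartition side ->
  #|side| = #|predC side|.
Proof.
move=> simple reg r_gt0 bip.
have deg x : fplus adj (fun=> 1) x = r by rewrite fplus_nbhs // sum1_card reg.
have := sum_fplus_bipartition (fun=> 1) bip.
rewrite -(sum_fplus_bipartition (fun=> 1) (bipartitionC bip)).
under eq_bigr do rewrite deg; under [RHS]eq_bigr do rewrite deg.
by rewrite !sum_nat_const => /eqP; rewrite eqn_pmul2r // => /eqP.
Qed.

Lemma num_induced_colors_ge f (s : seq nat) :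
    uniq s -> (forall v, v \in s -> exists x, fplus adj f x = v) ->
  size s <= num_induced_colors adj f.
Proof.
move=> s_uniq s_values; apply: uniq_leq_size => // v /s_values [x <-].
by rewrite mem_undup map_f ?mem_enum.
Qed.

Lemma num_induced_colors_le f (s : seq nat) :
  (forall x, fplus adj f x \in s) -> num_induced_colors adj f <= size s.
Proof.
move=> s_values; apply: leq_trans (size_undup s).
by apply: uniq_leq_size (undup_uniq _) _ => v; rewrite !mem_undup => /mapP [x _ ->].
Qed.

Lemma chromatic_number_bipartition side x y :
  adj x y -> bipartition side -> chromatic_number_eq adj 2.
Proof.
move=> xy bip; split.
  exists (fun z => if side z then ord0 else ord_max) => u v /bip.
  by case: (side u) (side v) => [] [].
case=> [|[|//]] _ [c c_proper]; first by case: (c x).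
by have := c_proper x y xy; rewrite !ord1.
Qed.

Lemma fplus_two_colors side f x0 y0 :
    connected_graph adj -> bipartition side ->
    (forall x y, adj x y -> fplus adj f x != fplus adj f y) -> adj x0 y0 ->
    num_induced_colors adj f < 3 ->
  forall x, fplus adj f x = if side x0 == side x then fplus adj f x0 else fplus adj f y0.
Proof.
move=> conn bip f_proper x0y0 lt3.
set a := fplus adj f x0; set b := fplus adj f y0.
have a_neq_b : a != b := f_proper _ _ x0y0.
have fplus_ab x : fplus adj f x = if fplus adj f x == a then a else b.
  case: eqP => // /eqP x_neq_a; apply/eqP; apply: contraTT lt3 => x_neq_b.
  rewrite -leqNgt (num_induced_colors_ge (s := [:: a; b; fplus adj f x])) //.
    by rewrite /= !inE negb_or a_neq_b (eq_sym a) (eq_sym b) x_neq_a x_neq_b.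
  by move=> v; rewrite !inE => /or3P [] /eqP ->; eexists.
have a_flip u v : adj u v -> (fplus adj f u == a) != (fplus adj f v == a).
  move=> /f_proper; apply: contraNN => /eqP same.
  by rewrite (fplus_ab u) (fplus_ab v) same.
move=> x; have := connect_flip_eq a_flip bip (conn x0 x); rewrite eqxx => <-.
by rewrite {1}fplus_ab.
Qed.

Lemma three_le_num_induced_colors r side f :
    0 < n -> simple_graph adj -> connected_graph adj -> regular adj r -> 0 < r ->
    bipartition side -> local_antimagic adj f ->
  3 <= num_induced_colors adj f.
Proof.
move=> n_gt0 simple conn reg r_gt0 bip [_ f_proper].
pose x0 : 'I_n := Ordinal n_gt0.
have [y0 x0y0] : exists y0, adj x0 y0.
  have : 0 < #|[set y | adj x0 y]| by rewrite reg.
  by case/card_gt0P=> y; rewrite inE; exists y.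
rewrite leqNgt; apply/negP => /(fplus_two_colors conn bip f_proper x0y0) fplus_side.
have a_neq_b := f_proper _ _ x0y0.
have side_gt0 : 0 < #|predC side|.
  apply/card_gt0P; exists (if side x0 then y0 else x0); rewrite !inE.
  by move: (bip _ _ x0y0); case: ifP => [_|->]; case: (side y0).
have := sum_fplus_bipartition f bip.
rewrite -(sum_fplus_bipartition f (bipartitionC bip)).
under eq_bigr => x side_x do rewrite fplus_side side_x.
under [RHS]eq_bigr => x side_x do rewrite fplus_side (negPf side_x).
rewrite !sum_nat_const (regular_bipartition_card simple reg r_gt0 bip).
move/eqP; rewrite eqn_pmul2l //.
by case: (side x0); rewrite /= ?(negPf a_neq_b) // eq_sym (negPf a_neq_b).
Qed.

Lemma edge_labeling_imset (I : finType) (E : I -> {set 'I_n}) f :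
    injective E -> edges adj = [set E p | p : I] -> injective (f \o E) ->
    (forall p, 0 < f (E p) <= #|I|) ->
  edge_labeling adj f.
Proof.
move=> E_inj edgesE f_inj f_range.
rewrite /edge_labeling edgesE card_imset //; split; [|split].
- by move=> _ _ /imsetP [p _ ->] /imsetP [q _ ->] /f_inj ->.
- by move=> _ /imsetP [p _ ->].
move=> k /(injective_into_iota f_inj f_range) [p <-].
by exists (E p); rewrite ?imset_f.
Qed.

End InducedColors.

Section BipartiteCirculant.
Variables (m' r : nat).
Local Notation m := m'.+1.
Hypothesis r_le_m : r <= m.

Definition circU (i : 'I_m) : 'I_(m + m) := lshift m i.
Definition circW (l : 'I_m) : 'I_(m + m) := rshift m l.
Definition addm (i : 'I_m) (j : nat) : 'I_m := inord ((i + j) %% m).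
Definition subm (l : 'I_m) (j : nat) : 'I_m := inord ((l + m - j) %% m).

Definition circ_edge (p : 'I_m * 'I_r) : {set 'I_(m + m)} :=
  [set circU p.1; circW (addm p.1 p.2)].
Definition circ_adj : rel 'I_(m + m) :=
  fun x y => [exists p, circ_edge p == [set x; y]].

Lemma addmE i j : addm i j = (i + j) %% m :> nat.
Proof. by rewrite inordK // ltn_pmod. Qed.

Lemma submE l j : subm l j = (l + m - j) %% m :> nat.
Proof. by rewrite inordK // ltn_pmod. Qed.

Lemma addm_inj i j j' : j < m -> j' < m -> addm i j = addm i j' -> j = j'.
Proof.
move=> lt_j lt_j' /(congr1 (@nat_of_ord _)); rewrite !addmE => /eqP.
by rewrite eqn_modDl !modn_small // => /eqP.
Qed.

Lemma eq_addm l i j : j < m -> (l == addm i j) = (i == subm l j).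
Proof.
move=> lt_jm; rewrite -!val_eqE /= addmE submE.
have l_mod : val l = (l + m - j + j) %% m.
  by rewrite subnK ?modnDr ?modn_small //; lia.
by rewrite {1}l_mod eqn_modDr (modn_small (ltn_ord i)) eq_sym.
Qed.

Lemma addmK l j : j < m -> addm (subm l j) j = l.
Proof. by move=> lt_jm; apply/eqP; rewrite eq_sym eq_addm. Qed.

Lemma addm0 i : addm i 0 = i.
Proof. by apply: val_inj; rewrite /= addmE addn0 modn_small. Qed.

Lemma eq_circUW i l : (circU i == circW l) = false. Proof. exact: eq_lrshift. Qed.
Lemma eq_circWU i l : (circW l == circU i) = false. Proof. exact: eq_rlshift. Qed.
Lemma circU_inj : injective circU. Proof. exact: lshift_inj. Qed.
Lemma circW_inj : injective circW. Proof. exact: rshift_inj. Qed.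

Lemma circ_edge_inj : injective circ_edge.
Proof.
move=> [i j] [i' j'] eq_ij.
have : circU i \in circ_edge (i', j') by rewrite -eq_ij set21.
rewrite in_set2 eq_circUW orbF => /eqP/circU_inj /= eq_i; subst i'.
have : circW (addm i j) \in circ_edge (i, j') by rewrite -eq_ij set22.
rewrite in_set2 eq_circWU => /eqP/circW_inj /addm_inj eq_j.
by congr pair; apply: val_inj; apply: eq_j; apply: leq_trans r_le_m.
Qed.

Lemma circ_edgeP p x y : circ_edge p = [set x; y] ->
  x = circU p.1 /\ y = circW (addm p.1 p.2) \/ x = circW (addm p.1 p.2) /\ y = circU p.1.
Proof.
move=> eq_p.
have hx : x \in circ_edge p by rewrite eq_p set21.
have hy : y \in circ_edge p by rewrite eq_p set22.
have hU : circU p.1 \in [set x; y] by rewrite -eq_p set21.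
have hW : circW (addm p.1 p.2) \in [set x; y] by rewrite -eq_p set22.
move: hx hy hU hW; rewrite !in_set2.
by do 2 case/orP=> /eqP ->; rewrite ?eqxx ?eq_circUW ?eq_circWU; auto.
Qed.

Lemma circ_adjP x y : reflect (exists p, circ_edge p = [set x; y]) (circ_adj x y).
Proof. by apply: (iffP existsP) => -[p /eqP]; exists p. Qed.

Lemma circ_adj_edge (p : 'I_m * 'I_r) : circ_adj (circU p.1) (circW (addm p.1 p.2)).
Proof. by apply/circ_adjP; exists p. Qed.

Lemma circ_simple : simple_graph circ_adj.
Proof.
split=> [x y|x].
  by apply/idP/idP=> /circ_adjP [p]; rewrite setUC => eq_p; apply/circ_adjP; exists p.
apply/negbTE/negP=> /circ_adjP [p /circ_edgeP [] [-> e_x]];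
  by move/eqP: e_x; rewrite ?eq_circUW ?eq_circWU.
Qed.

Lemma circ_bipartition : bipartition circ_adj (fun x => x < m).
Proof.
move=> x y /circ_adjP [p /circ_edgeP [] [-> ->]];
  by rewrite /= ltn_ord ltnNge leq_addr.
Qed.

Lemma edges_circ : edges circ_adj = [set circ_edge p | p : 'I_m * 'I_r].
Proof.
apply/setP=> e; apply/edgesP/imsetP => [[x [y [/circ_adjP [p eq_p] ->]]]|[p _ ->]].
  by exists p.
by exists (circU p.1), (circW (addm p.1 p.2)); rewrite circ_adj_edge.
Qed.

Lemma ltn_ord_m (j : 'I_r) : j < m.
Proof. exact: leq_trans (ltn_ord j) r_le_m. Qed.

Lemma inj_addm i : injective (fun j : 'I_r => addm i j).
Proof. by move=> j j' /addm_inj eq_j; apply/val_inj/eq_j; apply: ltn_ord_m. Qed.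

Lemma inj_subm l : injective (fun j : 'I_r => subm l j).
Proof.
move=> j j' eq_j; apply: (@inj_addm (subm l j)).
by rewrite /= {2}eq_j !addmK ?ltn_ord_m.
Qed.

Lemma nbhs_U i : [set y | circ_adj (circU i) y] = [set circW (addm i j) | j : 'I_r].
Proof.
apply/setP=> y; rewrite inE; apply/circ_adjP/imsetP => [[p /circ_edgeP []]|[j _ ->]].
- by case=> /circU_inj <- ->; exists p.2.
- by case=> /eqP; rewrite eq_circUW.
- by exists (i, j).
Qed.

Lemma nbhs_W l : [set y | circ_adj (circW l) y] = [set circU (subm l j) | j : 'I_r].
Proof.
apply/setP=> y; rewrite inE; apply/circ_adjP/imsetP => [[p /circ_edgeP []]|[j _ ->]].
- by case=> /eqP; rewrite eq_circWU.
- case=> /circW_inj /eqP; rewrite eq_addm ?ltn_ord_m // => /eqP eq_p1 ->.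
  by exists p.2; rewrite ?eq_p1.
- by exists (subm l j, j); rewrite /circ_edge addmK ?ltn_ord_m // setUC.
Qed.

Lemma circ_regular : regular circ_adj r.
Proof.
move=> x; case: (split_ordP x) => [i ->|l ->]; rewrite -/(circU _) -/(circW _).
  by rewrite nbhs_U card_imset ?card_ord // => j j' /circW_inj /inj_addm.
by rewrite nbhs_W card_imset ?card_ord // => j j' /circU_inj /inj_subm.
Qed.

Lemma fplus_U f i : fplus circ_adj f (circU i) = \sum_(j < r) f (circ_edge (i, j)).
Proof.
rewrite (fplus_nbhs _ _ circ_simple) nbhs_U big_imset //.
by move=> j j' _ _ /circW_inj /inj_addm.
Qed.

Lemma fplus_W f l : fplus circ_adj f (circW l) = \sum_(j < r) f (circ_edge (subm l j, j)).
Proof.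
rewrite (fplus_nbhs _ _ circ_simple) nbhs_W big_imset /=; last first.
  by move=> j j' _ _ /circU_inj /inj_subm.
by apply: eq_bigr => j _; rewrite /circ_edge addmK ?ltn_ord_m // setUC.
Qed.

Lemma circ_connected : 1 < r -> connected_graph circ_adj.
Proof.
move=> lt1r; have [adj_sym _] := circ_simple.
pose j0 : 'I_r := Ordinal (ltnW lt1r); pose j1 : 'I_r := Ordinal lt1r.
have U_W l : circ_adj (circU l) (circW l).
  by have := circ_adj_edge (l, j0); rewrite /= addm0.
have U_connect k : k < m -> connect circ_adj (circU (inord 0)) (circU (inord k)).
  elim: k => [|k IHk] lt_km; first exact: connect0.
  apply: connect_trans (IHk (ltnW lt_km)) _.
  have next : addm (inord k) j1 = inord k.+1.
    by apply: val_inj; rewrite /= addmE !inordK ?addn1 ?modn_small //; lia.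
  apply: (connect_trans (connect1 (circ_adj_edge (inord k, j1)))); rewrite /= next.
  by apply: connect1; rewrite adj_sym.
have from_U0 x : connect circ_adj (circU (inord 0)) x.
  case: (split_ordP x) => [i ->|l ->]; rewrite -/(circU _) -/(circW _).
    by rewrite -(inord_val i); apply: U_connect.
  apply: connect_trans _ (connect1 (U_W l)).
  by rewrite -(inord_val l); apply: U_connect.
move=> x y; apply: connect_trans _ (from_U0 y).
by rewrite (sym_connect_sym adj_sym) from_U0.
Qed.

Definition circ_lab (i j : nat) : nat := j * m + (if odd j then m - i else i.+1).

Definition circ_label (e : {set 'I_(m + m)}) : nat :=
  if [pick p | circ_edge p == e] is Some p then circ_lab p.1 p.2 else 0.

Lemma circ_label_edge p : circ_label (circ_edge p) = circ_lab p.1 p.2.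
Proof.
rewrite /circ_label; case: pickP => [q /eqP /circ_edge_inj -> //|/(_ p)].
by rewrite eqxx.
Qed.

Lemma circ_lab_pred i j : i < m ->
  (circ_lab i j).-1 = j * m + (if odd j then m - i.+1 else i).
Proof. by rewrite /circ_lab; case: ifP => _; lia. Qed.

Lemma circ_lab_inj i j i' j' : i < m -> i' < m ->
  circ_lab i j = circ_lab i' j' -> i = i' /\ j = j'.
Proof.
move=> lt_im lt_i'm /(congr1 predn); rewrite !circ_lab_pred //.
set s := (if odd j then _ else _); set s' := (if odd j' then _ else _).
have lt_sm : s < m by rewrite /s; case: ifP => _; lia.
have lt_s'm : s' < m by rewrite /s'; case: ifP => _; lia.
move=> eq_lab; have eq_j : j = j'.
  by move: (congr1 (divn^~ m) eq_lab) => /=; rewrite !divnMDl // !divn_small // !addn0.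
move: eq_lab; rewrite /s /s' -eq_j => /eqP; rewrite eqn_add2l.
by case: ifP => _ /eqP eq_i; split=> //; lia.
Qed.

Lemma circ_lab_range i j : i < m -> j < r -> 0 < circ_lab i j <= m * r.
Proof.
move=> lt_im lt_jr; have := leq_mul lt_jr (leqnn m); rewrite /circ_lab mulSn mulnC.
by case: ifP => _; lia.
Qed.

Lemma circ_edge_labeling : edge_labeling circ_adj circ_label.
Proof.
apply: (edge_labeling_imset circ_edge_inj edges_circ) => [p q|p] /=.
  rewrite !circ_label_edge => /circ_lab_inj [] // /val_inj eq_1 /val_inj eq_2.
  by case: p q eq_1 eq_2 => [i j] [i' j'] /= -> ->.
by rewrite circ_label_edge card_prod !card_ord circ_lab_range.
Qed.

Lemma circ_chromatic : 0 < r -> chromatic_number_eq circ_adj 2.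
Proof.
move=> r_gt0.
exact: chromatic_number_bipartition (circ_adj_edge (ord0, Ordinal r_gt0)) circ_bipartition.
Qed.

Section EvenDegree.
Hypothesis r_even : ~~ odd r.
Local Notation k := r./2.

Definition label_sum_U : nat := \sum_(0 <= j < r) circ_lab 0 j.

Lemma circ_lab_pair_U i t : i < m ->
  circ_lab i t.*2 + circ_lab i t.*2.+1 = circ_lab 0 t.*2 + circ_lab 0 t.*2.+1.
Proof. by rewrite /circ_lab /= odd_double /=; lia. Qed.

Lemma circ_lab_pair_W l t : l < m -> t.*2.+1 < m ->
  circ_lab ((l + m - t.*2) %% m) t.*2 + circ_lab ((l + m - t.*2.+1) %% m) t.*2.+1
    + m * (l == t.*2)
  = circ_lab 0 t.*2 + circ_lab 0 t.*2.+1 + 1.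
Proof.
move=> lt_lm lt_tm; rewrite /circ_lab /= odd_double /= !modn_cyclic_sub //; try lia.
by case: eqP => [->|]; case: ifP; case: ifP; lia.
Qed.

Lemma fplus_label_U i : fplus circ_adj circ_label (circU i) = label_sum_U.
Proof.
rewrite fplus_U; under eq_bigr do rewrite circ_label_edge /=.
transitivity (\sum_(0 <= j < r) circ_lab i j); first by rewrite big_mkord.
rewrite /label_sum_U -(even_halfK r_even) !sum_nat_pairs.
by apply: eq_big_nat => t _; apply: circ_lab_pair_U.
Qed.

Lemma fplus_label_W l :
  fplus circ_adj circ_label (circW l) + m * ((l < r) && ~~ odd l) = label_sum_U + k.
Proof.
rewrite fplus_W; under eq_bigr do rewrite circ_label_edge /= submE.
transitivity (\sum_(0 <= j < r) circ_lab ((l + m - j) %% m) j + m * ((l < r) && ~~ odd l)).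
  by rewrite big_mkord.
rewrite /label_sum_U -{1 2 3}(even_halfK r_even) !sum_nat_pairs.
rewrite -sum_nat_eq_double big_distrr -big_split /=.
transitivity (\sum_(0 <= t < k) (circ_lab 0 t.*2 + circ_lab 0 t.*2.+1 + 1)).
  apply: eq_big_nat => t /andP [_ lt_tk]; apply: circ_lab_pair_W => //.
  by move: r_le_m; rewrite -(even_halfK r_even); lia.
by rewrite big_split /= sum_nat_const_nat subn0 muln1.
Qed.

Lemma fplus_label_U_neq_W i l : 0 < r ->
  fplus circ_adj circ_label (circU i) != fplus circ_adj circ_label (circW l).
Proof.
move=> r_gt0; have := fplus_label_W l; rewrite fplus_label_U.
move: r_gt0 r_le_m; rewrite -(even_halfK r_even) => r_gt0 k_le_m.
by case: (_ && _) => /=; lia.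
Qed.

Lemma circ_local_antimagic : 0 < r -> local_antimagic circ_adj circ_label.
Proof.
move=> r_gt0; split; first exact: circ_edge_labeling.
move=> x y /circ_adjP [p /circ_edgeP [] [-> ->]]; last rewrite eq_sym;
  exact: fplus_label_U_neq_W.
Qed.

Lemma circ_num_induced_colors_le : num_induced_colors circ_adj circ_label <= 3.
Proof.
apply: (@num_induced_colors_le _ _ _ [:: label_sum_U; label_sum_U + k; label_sum_U + k - m]).
move=> x; case: (split_ordP x) => [i ->|l ->]; rewrite -/(circU _) -/(circW _) !inE.
  by rewrite fplus_label_U eqxx.
have := fplus_label_W l; case: (_ && _) => /= e; apply/or3P.
  by apply: Or33; apply/eqP; lia.
by apply: Or32; apply/eqP; lia.
Qed.

Lemma circ_chi_la : 1 < r -> chi_la_eq circ_adj 3.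
Proof.
move=> lt1r; have r_gt0 := ltnW lt1r.
have three_le f : local_antimagic circ_adj f -> 3 <= num_induced_colors circ_adj f.
  apply: (three_le_num_induced_colors (r := r) (side := fun x => x < m)) => //.
  - exact: circ_simple.
  - exact: circ_connected.
  - exact: circ_regular.
  - exact: circ_bipartition.
split=> //; exists circ_label; first exact: circ_local_antimagic.
apply/eqP; rewrite eqn_leq circ_num_induced_colors_le three_le //.
exact: circ_local_antimagic.
Qed.

End EvenDegree.

End BipartiteCirculant.

Theorem mainTheorem7 (r : nat) :
  2 <= r -> ~~ odd r ->
  forall N : nat, exists n : nat, exists adj : rel 'I_n,
    [/\ N <= n, ~~ odd n, simple_graph adj, connected_graph adj &
        [/\ regular adj r, chi_la_eq adj 3 & chromatic_number_eq adj 2]].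
Proof.
move=> r_ge2 r_even N.
have r_le_m : r <= (N + r).+1 by lia.
exists ((N + r).+1 + (N + r).+1), (@circ_adj (N + r) r); split.
- lia.
- by rewrite addnn odd_double.
- exact: circ_simple.
- exact: circ_connected r_le_m r_ge2.
- split; first exact: circ_regular r_le_m.
    exact: circ_chi_la r_le_m r_even r_ge2.
  exact: circ_chromatic _ (ltnW r_ge2).
Qed.
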